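(* If $C=(C_{i,j})$ is an $m\times n$ evolutionary stable (ES) configuration with $m,n>2$, then $C_{m-1,2}=C_{m-1,n-1}=0$.
   Context: An $m\times n$ configuration is a $0$-$1$ matrix $C=(C_{i,j})$, $1\le i\le m$, $1\le j\le n$; $C_{i,j}=1$ means lot $(i,j)$ is occupied by a house. Row $1$ is the northernmost, row $m$ the southernmost; column $1$ westernmost, column $n$ easternmost. A house at $(i,j)$ is blocked from sunlight if the three lots $(i,j-1)$, $(i,j+1)$, $(i+1,j)$ all lie inside the grid and are all occupied (lots outside the grid never obstruct sunlight). $C$ is permissible if no house is blocked, and maximal if it is permissible and setting any single empty lot to $1$ yields a non-permissible configuration. A maximal configuration is resistant to predators if, for every empty lot, putting a house on it results in that new house being blocked; it is resistant to altruists if, for every empty lot, putting a house on it results in some other (already existing) house being blocked. An ES configuration is a maximal configuration resistant to both predators and altruists. *)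

From mathcomp Require Import all_boot.
Set Implicit Arguments. Unset Strict Implicit. Unset Printing Implicit Defensive.

(* An m x n configuration is a 0-1 matrix, represented as a function
   C : nat -> nat -> bool with 1-based indices; only entries with
   1 <= i <= m, 1 <= j <= n are ever consulted (true = house). *)
Definition config := nat -> nat -> bool.

Definition in_grid (m n i j : nat) : bool := (1 <= i <= m) && (1 <= j <= n).

Definition blocked (m n : nat) (C : config) (i j : nat) : bool :=
  [&& C i j, in_grid m n i (j - 1) && (1 < j), in_grid m n i (j + 1),
      in_grid m n (i + 1) j, C i (j - 1), C i (j + 1) & C (i + 1) j].

Definition permissible (m n : nat) (C : config) : Prop :=
  forall i j, in_grid m n i j -> ~~ blocked m n C i j.

Definition add_house (C : config) (a b : nat) : config :=
  fun i j => if (i == a) && (j == b) then true else C i j.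

Definition maximal (m n : nat) (C : config) : Prop :=
  permissible m n C /\
  forall a b, in_grid m n a b -> C a b = false ->
    ~ permissible m n (add_house C a b).

Definition resistant_to_predators (m n : nat) (C : config) : Prop :=
  maximal m n C /\
  forall a b, in_grid m n a b -> C a b = false ->
    blocked m n (add_house C a b) a b.

Definition resistant_to_altruists (m n : nat) (C : config) : Prop :=
  maximal m n C /\
  forall a b, in_grid m n a b -> C a b = false ->
    exists i j, [/\ in_grid m n i j, (i, j) <> (a, b), C i j &
                    blocked m n (add_house C a b) i j].

Definition ES (m n : nat) (C : config) : Prop :=
  maximal m n C /\ resistant_to_predators m n C /\ resistant_to_altruists m n C.

From HB Require Import structures.
From mathcomp Require Import all_boot zify.
Set Implicit Arguments. Unset Strict Implicit. Unset Printing Implicit Defensive.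

(* All conditions defining an ES configuration are local: those of lot (i, j) only involve rows
   i - 1, i, i + 1 and columns j - 2, ..., j + 2. Reading a band of consecutive rows column by
   column is therefore a finite-state process. A 46-state automaton on the columns of two
   consecutive rows defines an invariant which holds for rows 1, 2 (read from the band of rows
   1..3), passes from rows i, i + 1 to rows i + 1, i + 2 (read from rows i..i + 3), and fails for
   rows m - 2, m - 1 when row m - 1 has a house in column 2 or in column n - 1 (read from rows
   m - 2..m). Each of these three facts quantifies over all words accepted by a finite scanner
   and is established by a certificate: a set of scanner states closed under all steps, checked
   by computation. *)

(** * The row-pair automaton *)

(* Found by computer search; 0 is the initial state. *)
Definition pair_trans : seq (seq nat) :=
  [:: [:: 1; 1; 1; 2]; [:: 1; 1; 1; 1]; [:: 1; 3; 4; 5]; [:: 1; 1; 6; 7]; [:: 1; 8; 1; 9];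
      [:: 1; 10; 1; 1]; [:: 1; 1; 1; 11]; [:: 1; 1; 12; 13]; [:: 1; 1; 1; 14]; [:: 1; 15; 1; 1];
      [:: 1; 1; 16; 17]; [:: 1; 18; 1; 1]; [:: 1; 19; 1; 9]; [:: 1; 20; 1; 1]; [:: 1; 1; 4; 21];
      [:: 1; 1; 4; 22]; [:: 1; 23; 1; 24]; [:: 1; 25; 1; 13]; [:: 1; 1; 6; 26]; [:: 1; 1; 6; 27];
      [:: 1; 1; 1; 17]; [:: 1; 1; 1; 1]; [:: 1; 1; 12; 1]; [:: 1; 1; 1; 28]; [:: 1; 29; 1; 1];
      [:: 1; 1; 1; 30]; [:: 1; 1; 31; 1]; [:: 1; 1; 12; 21]; [:: 1; 1; 32; 21]; [:: 1; 1; 16; 33];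
      [:: 1; 1; 1; 13]; [:: 1; 18; 1; 34]; [:: 1; 23; 1; 35]; [:: 1; 1; 4; 1]; [:: 1; 36; 1; 1];
      [:: 1; 37; 1; 1]; [:: 1; 1; 38; 39]; [:: 1; 1; 32; 40]; [:: 1; 41; 1; 34]; [:: 1; 1; 42; 1];
      [:: 1; 1; 32; 1]; [:: 1; 1; 1; 43]; [:: 1; 44; 1; 34]; [:: 1; 1; 38; 1]; [:: 1; 1; 6; 45];
      [:: 1; 1; 42; 21]].

Definition pair_accept : seq bool :=
  [:: false; false; false; false; false; false; false; true;
      false; true; false; false; false; true; false; false;
      false; true; false; false; false; true; true; false;
      true; false; true; true; false; false; false; false;
      false; true; true; true; false; false; false; true;
      true; false; false; false; false; true].

Definition pair_step (q : nat) (x : bool * bool) : nat :=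
  nth 0 (nth [::] pair_trans q) (2 * x.1 + x.2).

Fixpoint pair_state (u : nat -> bool * bool) (k : nat) : nat :=
  if k is k'.+1 then pair_step (pair_state u k') (u k) else 0.

Definition pair_ok (u : nat -> bool * bool) (n : nat) : bool :=
  nth false pair_accept (pair_state u n).

Lemma eq_pair_ok u v n : u =1 v -> pair_ok u n = pair_ok v n.
Proof. by move=> uv; rewrite /pair_ok; congr nth; elim: n => //= n ->; rewrite uv. Qed.

Definition rows_invariant (C : config) (n i : nat) : bool :=
  pair_ok (fun k => (C i k, C i.+1 k)) n.

(** * Certified column scanners *)

Definition letter := seq bool.

Definition bit (x : letter) (r : nat) : bool := nth false x r.

Definition bit_opt (o : option letter) (r : nat) : bool :=
  if o is Some x then bit x r else false.

Fixpoint words (R : nat) : seq letter :=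
  if R is R'.+1 then [seq b :: x | b <- [:: false; true], x <- words R'] else [:: [::]].

Lemma mem_words R x : size x = R -> x \in words R.
Proof.
elim: R x => [|R IH] [|b x] //= [/IH x_in].
by rewrite cats0 mem_cat; case: b; rewrite (map_f _ x_in) ?orbT.
Qed.

Inductive trie := Leaf | Node of bool & trie & trie.

Fixpoint trie_mem (t : trie) (k : seq bool) : bool :=
  if t is Node b l r then
    if k is x :: k' then trie_mem (if x then r else l) k' else b
  else false.

Fixpoint trie_add (t : trie) (k : seq bool) : trie :=
  let: (b, l, r) := if t is Node b l r then (b, l, r) else (false, Leaf, Leaf) in
  if k is x :: k' then
    if x then Node b l (trie_add r k') else Node b (trie_add l k') r
  else Node true l r.

Lemma trie_mem_add t k k' : trie_mem (trie_add t k) k' = (k' == k) || trie_mem t k'.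
Proof.
elim: k t k' => [|x k IH] [|b l r] [|x' k'] //=; first by case: x'.
all: by case: x; rewrite //= ?eqseq_cons; case: x' => //=; rewrite IH.
Qed.

Definition prefix_code (T : Type) (e : T -> seq bool) :=
  forall x y r r', e x ++ r = e y ++ r' -> x = y /\ r = r'.

Definition unary (q : nat) : seq bool := rcons (nseq q true) false.

Definition code_bits (x : letter) : seq bool :=
  rcons (flatten [seq [:: true; b] | b <- x]) false.

Definition code_opt (o : option letter) : seq bool :=
  if o is Some x then true :: code_bits x else [:: false].

Lemma unary_prefix : prefix_code unary.
Proof.
elim=> [|q IH] [|q'] r r' //=; first by case.
by case=> /IH [-> ->].
Qed.

Lemma code_bits_prefix : prefix_code code_bits.
Proof.
elim=> [|b x IH] [|b' x'] r r' //=; first by case.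
by case=> -> /IH [-> ->].
Qed.

Lemma code_opt_prefix : prefix_code code_opt.
Proof. by case=> [x|] [x'|] r r' //= [] // /code_bits_prefix [-> ->]. Qed.

(* Two automaton states and the last four columns read, [None] standing for a column outside
   the grid. *)
Inductive scan :=
  Scan of nat & nat & option letter & option letter & option letter & option letter.

Definition code_scan (s : scan) : seq bool :=
  let: Scan q1 q2 a b c d := s in
  unary q1 ++ unary q2 ++ code_opt a ++ code_opt b ++ code_opt c ++ code_opt d.

Lemma code_scan_inj : injective code_scan.
Proof.
case=> q1 q2 a b c d [q1' q2' a' b' c' d'] /=.
move=> /unary_prefix [-> /unary_prefix [-> /code_opt_prefix [-> /code_opt_prefix [->]]]].
move=> /code_opt_prefix [->]; rewrite -[code_opt d]cats0 -[code_opt d']cats0.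
by move=> /code_opt_prefix [->].
Qed.

HB.instance Definition _ := Equality.copy scan (inj_type code_scan_inj).

Definition trie_of (S : seq scan) : trie := foldl (fun t s => trie_add t (code_scan s)) Leaf S.

Lemma mem_trie_of S s : trie_mem (trie_of S) (code_scan s) = (s \in S).
Proof.
rewrite /trie_of -[s \in S]orbF; have -> : false = trie_mem Leaf (code_scan s) by [].
elim: S Leaf => [|s' S IH] t //=.
by rewrite IH trie_mem_add in_cons orbA (inj_eq code_scan_inj) (orbC (s == s')).
Qed.

Definition window_pred :=
  option letter -> option letter -> letter -> option letter -> option letter -> bool.

Definition column (n : nat) (w : nat -> letter) (k : nat) : option letter :=
  if 0 < k <= n then Some (w k) else None.

Definition all_windows (window : window_pred) (n : nat) (w : nat -> letter) : Prop :=
  forall k, 0 < k <= n ->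
    window (column n w k.-2) (column n w k.-1) (w k) (column n w k.+1) (column n w k.+2).

Section Scanner.

Variables (R : nat) (window : window_pred) (pr1 pr2 : letter -> bool * bool).
Variable goal : bool -> bool -> bool.

Definition window_at (l2 l1 c r1 r2 : option letter) : bool :=
  if c is Some x then window l2 l1 x r1 r2 else true.

Definition scan_step (s : scan) (x : letter) : option scan :=
  let: Scan q1 q2 l2 l1 c r1 := s in
  if window_at l2 l1 c r1 (Some x) then
    Some (Scan (pair_step q1 (pr1 x)) (pair_step q2 (pr2 x)) l1 c r1 (Some x))
  else None.

(* At the end of a word of length n, [l1] is column n - 2, present iff n > 2. *)
Definition scan_final (s : scan) : bool :=
  let: Scan q1 q2 l2 l1 c r1 := s in
  [==> l1 != None, window_at l2 l1 c r1 None, window_at l1 c r1 None None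
   => goal (nth false pair_accept q1) (nth false pair_accept q2)].

Definition scan0 : scan := Scan 0 0 None None None None.

Definition certificate (S : seq scan) : bool :=
  let T := trie_of S in
  trie_mem T (code_scan scan0) &&
  all (fun s => all (fun s' => trie_mem T (code_scan s')) (pmap (scan_step s) (words R))
                && scan_final s) S.

Lemma certificateP S : certificate S ->
  [/\ scan0 \in S,
      forall s x s', s \in S -> size x = R -> scan_step s x = Some s' -> s' \in S
    & forall s, s \in S -> scan_final s].
Proof.
rewrite /certificate mem_trie_of => /andP [S0 /allP S_closed].
split=> // [s x s' s_in x_R step | s /S_closed /andP [] //].
have /andP [/allP succ_in _] := S_closed s s_in.
by rewrite -mem_trie_of; apply: succ_in; rewrite mem_pmap -step map_f // mem_words.
Qed.

Fixpoint explore (fuel : nat) (todo : seq scan) (seen : trie) (acc : seq scan) : seq scan :=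
  if fuel is fuel'.+1 then
    if todo is s :: todo' then
      let new := [seq s' <- pmap (scan_step s) (words R) | ~~ trie_mem seen (code_scan s')] in
      explore fuel' (new ++ todo') (foldl (fun t s' => trie_add t (code_scan s')) seen new)
        (new ++ acc)
    else acc
  else acc.

Definition reachable : seq scan :=
  explore (2 ^ 17) [:: scan0] (trie_add Leaf (code_scan scan0)) [:: scan0].

Section Soundness.

Variables (S : seq scan) (n : nat) (w : nat -> letter).
Hypotheses (S_cert : certificate S) (n_gt2 : 2 < n) (w_size : forall k, size (w k) = R).
Hypothesis w_window : all_windows window n w.

(* For k < 3 the truncated subtractions yield column 0, which is outside the grid as it
   should be. *)
Definition scan_after (k : nat) : scan :=
  Scan (pair_state (pr1 \o w) k) (pair_state (pr2 \o w) k)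
    (column n w (k - 3)) (column n w (k - 2)) (column n w (k - 1)) (column n w k).

Lemma window_at_column k :
  window_at (column n w k.-2) (column n w k.-1) (column n w k) (column n w k.+1)
    (column n w k.+2).
Proof. by rewrite /window_at [column n w k]/column; case: ifP => // k_in; apply: w_window. Qed.

Lemma scan_after_step k : k < n -> scan_step (scan_after k) (w k.+1) = Some (scan_after k.+1).
Proof.
move=> k_lt; rewrite /scan_step /scan_after.
have -> : Some (w k.+1) = column n w k.+1 by rewrite /column ltn0Sn k_lt.
case: k k_lt => [|k] k_lt; first by [].
by rewrite !subSS !subn0 !subn1 !subn2 window_at_column.
Qed.

Lemma scan_after_mem k : k <= n -> scan_after k \in S.
Proof.
have [S0 S_closed _] := certificateP S_cert.
elim: k => [|k IH] k_le; first exact: S0.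
by apply: (S_closed _ (w k.+1)); [apply: IH; lia | | apply: scan_after_step].
Qed.

Theorem scan_sound : goal (pair_ok (pr1 \o w) n) (pair_ok (pr2 \o w) n).
Proof.
have [_ _ S_final] := certificateP S_cert.
have /S_final := scan_after_mem (leqnn n); rewrite /scan_final /scan_after.
have out k : n < k -> column n w k = None by rewrite /column; case: ifP => //; lia.
have W1 := window_at_column n.-1; have W2 := window_at_column n.
rewrite prednK ?(out n.+1) ?(out n.+2) // in W1 W2; last lia.
have l1_in : column n w n.-2 != None by rewrite /column ifT //; lia.
by rewrite (_ : n - 3 = n.-1.-2) ?subn2 ?subn1 ?W1 ?W2 ?l1_in; last lia.
Qed.

End Soundness.

End Scanner.

(** * Local rules of ES configurations *)

Lemma blockedE m n (D : config) i j : blocked m n D i j =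
  [&& D i j, D i j.-1, D i j.+1, D i.+1 j, 0 < i, i < m, 1 < j & j < n].
Proof.
rewrite /blocked /in_grid subn1 !addn1.
by case: (D i j) (D i j.-1) (D i j.+1) (D i.+1 j) => [] [] [] [] /=; lia.
Qed.

Lemma add_houseE (D : config) a b i j :
  add_house D a b i j = ((i == a) && (j == b)) || D i j.
Proof. by rewrite /add_house; case: ifP. Qed.

(* The rule for a lot [c] with left, right and lower neighbours [l], [r], [d]; [ll], [rr], [uu]
   say that adding a house at [c] would block its left, right or upper neighbour. *)
Definition es_cell (c l r d ll rr uu : bool) : bool :=
  if c then ~~ [&& l, r & d] else [&& l, r, d & [|| ll, rr | uu]].

Definition slice (C : config) (a R k : nat) : letter := mkseq (fun r => C (a + r) k) R.

Lemma size_slice C a R k : size (slice C a R k) = R.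
Proof. exact: size_mkseq. Qed.

Lemma bit_slice C a R k r : bit (slice C a R k) r = (r < R) && C (a + r) k.
Proof.
rewrite /bit /slice; case: ltnP => r_R; first by rewrite nth_mkseq.
by rewrite nth_default ?size_mkseq.
Qed.

Lemma bit_opt_column C a R n k r :
  bit_opt (column n (slice C a R) k) r = [&& 0 < k <= n, r < R & C (a + r) k].
Proof. by rewrite /column; case: ifP => //= _; rewrite bit_slice. Qed.

(* The rules visible in five consecutive columns of a band of R rows, centred on [c]: the outer
   columns of the grid are full; elsewhere every row but the last obeys [es_cell], the first one
   only when it is the top row of the grid ([top]), and an empty lot of the last row lies
   between two houses. *)
Definition slice_window (R : nat) (top : bool) : window_pred := fun l2 l1 c r1 r2 =>
  if (l1 == None) || (r1 == None) then all id c else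
  all (fun r => es_cell (bit c r) (bit_opt l1 r) (bit_opt r1 r) (bit c r.+1)
                  (bit_opt l2 r && bit_opt l1 r.+1) (bit_opt r2 r && bit_opt r1 r.+1)
                  (if r is r'.+1 then [&& bit_opt l1 r', bit c r' & bit_opt r1 r'] else false))
      [seq r <- iota 0 R.-1 | top || (0 < r)]
  && (bit c R.-1 || bit_opt l1 R.-1 && bit_opt r1 R.-1).

Section ES.

Variables (m n : nat) (C : config).
Hypothesis C_ES : ES m n C.

Lemma ES_house_unblocked i j : 0 < i < m -> 1 < j < n -> C i j ->
  ~~ [&& C i j.-1, C i j.+1 & C i.+1 j].
Proof.
case: C_ES => [[C_perm _] _] i_in j_in Cij.
have /C_perm : in_grid m n i j by rewrite /in_grid; lia.
by rewrite blockedE Cij; case/andP: i_in => -> ->; case/andP: j_in => -> ->; rewrite !andbT.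
Qed.

Lemma ES_empty_surrounded i j : in_grid m n i j -> C i j = false ->
  [&& 1 < j < n, i < m, C i j.-1, C i j.+1 & C i.+1 j].
Proof.
case: C_ES => _ [[_ C_pred] _] ij_in Cij.
move: (C_pred i j ij_in Cij); rewrite blockedE !add_houseE !eqxx.
move=> /and5P [_ l r d /and4P [i0 im j1 jn]].
have [nl nr nd] : [/\ j.-1 != j, j.+1 != j & i.+1 != i] by split; lia.
by move: l r d; rewrite j1 jn im (negbTE nl) (negbTE nr) (negbTE nd) /= => -> -> ->.
Qed.

Lemma ES_border i j : in_grid m n i j -> [|| j == 1, j == n | i == m] -> C i j.
Proof.
move=> ij_in border; case Cij: (C i j) => //.
case/and5P: (ES_empty_surrounded ij_in Cij) => j_in im _ _ _.
by move: border ij_in j_in im; rewrite /in_grid; lia.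
Qed.

Lemma ES_empty_flanked i j : 0 < i <= m -> 1 < j < n -> C i j || C i j.-1 && C i j.+1.
Proof.
move=> i_in j_in; case Cij: (C i j) => //=.
have ij_in : in_grid m n i j by rewrite /in_grid; lia.
by case/and5P: (ES_empty_surrounded ij_in Cij) => _ _ -> -> _.
Qed.

(* The house blocked by the new house at (i, j) was unblocked before, so (i, j) is its left,
   right or lower neighbour. *)
Lemma ES_empty_altruist i j : in_grid m n i j -> C i j = false ->
  [|| (2 < j) && C i j.-2 && C i.+1 j.-1, (j.+2 <= n) && C i j.+2 && C i.+1 j.+1
    | (1 < i) && [&& C i.-1 j.-1, C i.-1 j & C i.-1 j.+1]].
Proof.
case: C_ES => [[C_perm _] [_ [_ C_alt]]] ij_in Cij.
have [i' [j' [ij'_in _ Cij' blocked']]] := C_alt i j ij_in Cij.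
have := C_perm i' j' ij'_in; move: blocked'; rewrite !blockedE !add_houseE Cij' orbT /=.
move=> /and4P [l' r' d' /and4P [i'0 i'm j'1 j'n]].
rewrite i'0 i'm j'1 j'n !andbT !negb_and => /or3P [Cl|Cr|Cd].
- move: l'; rewrite (negbTE Cl) orbF => /andP [/eqP ii /eqP jj].
  have {}jj : j' = j.+1 by lia.
  by subst; move: r' d' j'n; clear; lia.
- move: r'; rewrite (negbTE Cr) orbF => /andP [/eqP ii /eqP jj].
  by subst; move: l' d' j'1 => /=; clear; lia.
- move: d'; rewrite (negbTE Cd) orbF => /andP [/eqP ii /eqP jj].
  by subst; move: l' r' Cij' i'0 => /=; clear; lia.
Qed.

Lemma ES_cell i j : 0 < i < m -> 1 < j < n ->
  es_cell (C i j) (C i j.-1) (C i j.+1) (C i.+1 j)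
    ((2 < j) && C i j.-2 && C i.+1 j.-1) ((j.+2 <= n) && C i j.+2 && C i.+1 j.+1)
    ((1 < i) && [&& C i.-1 j.-1, C i.-1 j & C i.-1 j.+1]).
Proof.
move=> i_in j_in; rewrite /es_cell; case Cij: (C i j); first exact: ES_house_unblocked.
have ij_in : in_grid m n i j by rewrite /in_grid; lia.
case/and5P: (ES_empty_surrounded ij_in Cij) => _ _ -> -> ->.
exact: ES_empty_altruist.
Qed.

Lemma ES_slice_window a R (top : bool) :
  0 < a -> 0 < R -> a + R <= m.+1 -> (top -> a = 1) ->
  all_windows (slice_window R top) n (slice C a R).
Proof.
move=> a_pos R_pos aR_le top_a k k_in; set col := column n _; rewrite /slice_window.
case: ifP => [border | /norP [/eqP l1_in /eqP r1_in]].
  apply/(all_nthP false) => r; rewrite size_mkseq => r_R.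
  rewrite /slice nth_mkseq //; apply: ES_border; first by rewrite /in_grid; lia.
  by move: border; rewrite /col /column; case: ifP; case: ifP => //=; lia.
have k_in' : 1 < k < n.
  by move: l1_in r1_in; rewrite /col /column; case: ifP; case: ifP => //; lia.
have [k1 k2] : (0 < k.-1 <= n) /\ (0 < k.+1 <= n) by lia.
have [k3 k4] : (0 < k.-2 <= n) = (2 < k) /\ (0 < k.+2 <= n) = (k.+2 <= n) by lia.
apply/andP; split.
  apply/allP => r; rewrite mem_filter mem_iota add0n => /andP [top_r /andP [_ r_R]].
  have [r_R' r_R''] : r < R /\ r.+1 < R by lia.
  rewrite /col !bit_opt_column !bit_slice k1 k2 k3 k4 r_R' r_R'' /=.
  case: r top_r r_R r_R' r_R'' => [|r] top_r r_R1 r_R _.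
    rewrite orbF in top_r; rewrite (top_a top_r) addn0 addn1 in aR_le *.
    by apply: ES_cell => //; lia.
  rewrite !bit_opt_column !bit_slice k1 k2 (ltnW r_R) !addnS /=.
  have := ES_cell (i := (a + r).+1) _ k_in'; rewrite /= ltnS addn_gt0 a_pos.
  by apply; lia.
rewrite /col !bit_opt_column !bit_slice k1 k2 (ltn_predL R) R_pos /=.
by apply: ES_empty_flanked k_in'; lia.
Qed.

End ES.

Definition rows01 (x : letter) : bool * bool := (bit x 0, bit x 1).
Definition rows12 (x : letter) : bool * bool := (bit x 1, bit x 2).

Lemma pair_ok_rows01 C a R n :
  1 < R -> pair_ok (rows01 \o slice C a R) n = rows_invariant C n a.
Proof.
move=> R_gt1; apply: eq_pair_ok => k.
by rewrite /= /rows01 !bit_slice addn0 addn1 R_gt1 ltnW.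
Qed.

Lemma pair_ok_rows12 C a R n :
  2 < R -> pair_ok (rows12 \o slice C a R) n = rows_invariant C n a.+1.
Proof.
move=> R_gt2; apply: eq_pair_ok => k.
by rewrite /= /rows12 !bit_slice addn1 addn2 R_gt2 ltnW.
Qed.

Definition top_window := slice_window 3 true.

Definition middle_window := slice_window 4 false.

(* Rows m - 2, m - 1, m, with a house in row m - 1 at the columns selected by [marked]. *)
Definition bottom_window (marked : option letter -> option letter -> bool) : window_pred :=
  fun l2 l1 c r1 r2 => [&& slice_window 3 false l2 l1 c r1 r2, bit c 2 & marked l2 r2 ==> bit c 1].

(* Columns 1, 2 and columns n - 1, n. *)
Definition left_mark (l2 r2 : option letter) : bool := l2 == None.
Definition right_mark (l2 r2 : option letter) : bool := r2 == None.

Definition top_scans := reachable 3 top_window rows01 rows01.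

Lemma top_certificate : certificate 3 top_window rows01 rows01 (fun p _ => p) top_scans.
Proof. by vm_compute. Qed.

Definition middle_scans := reachable 4 middle_window rows01 rows12.

Lemma middle_certificate :
  certificate 4 middle_window rows01 rows12 (fun p q => p ==> q) middle_scans.
Proof. by vm_compute. Qed.

Definition left_scans := reachable 3 (bottom_window left_mark) rows01 rows01.

Lemma left_certificate :
  certificate 3 (bottom_window left_mark) rows01 rows01 (fun p _ => ~~ p) left_scans.
Proof. by vm_compute. Qed.

Definition right_scans := reachable 3 (bottom_window right_mark) rows01 rows01.

Lemma right_certificate :
  certificate 3 (bottom_window right_mark) rows01 rows01 (fun p _ => ~~ p) right_scans.
Proof. by vm_compute. Qed.

(** * The invariant along the rows *)

Section ESRows.

Variables (m n : nat) (C : config).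
Hypotheses (m_gt2 : 2 < m) (n_gt2 : 2 < n) (C_ES : ES m n C).

Lemma rows_invariant_top : rows_invariant C n 1.
Proof.
have W : all_windows top_window n (slice C 1 3) by apply: (ES_slice_window C_ES) => //; lia.
rewrite -(pair_ok_rows01 C 1 n (_ : 1 < 3)) //.
exact: (scan_sound top_certificate n_gt2 (size_slice C 1 3) W).
Qed.

Lemma rows_invariant_succ a :
  0 < a -> a + 3 <= m -> rows_invariant C n a -> rows_invariant C n a.+1.
Proof.
move=> a_pos a_le.
have W : all_windows middle_window n (slice C a 4) by apply: (ES_slice_window C_ES) => //; lia.
have := scan_sound middle_certificate n_gt2 (size_slice C a 4) W.
by rewrite /= pair_ok_rows01 // pair_ok_rows12 // => /implyP.
Qed.

Lemma rows_invariant_bottom : rows_invariant C n m.-2.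
Proof.
suff: forall a, 0 < a -> a + 2 <= m -> rows_invariant C n a by apply; lia.
elim=> [|[|a] IH] // _ a_le; first exact: rows_invariant_top.
by apply: rows_invariant_succ; [lia | lia | apply: IH; lia].
Qed.

Lemma bottom_marks_impossible marked S :
  certificate 3 (bottom_window marked) rows01 rows01 (fun p _ => ~~ p) S ->
  ~ (forall k, 0 < k <= n ->
       marked (column n (slice C m.-2 3) k.-2) (column n (slice C m.-2 3) k.+2) -> C m.-1 k).
Proof.
move=> S_cert marked_house.
have W : all_windows (bottom_window marked) n (slice C m.-2 3).
  move=> k k_in; apply/and3P; split; first by apply: (ES_slice_window C_ES) => //; lia.
    rewrite bit_slice (_ : m.-2 + 2 = m); last lia.
    by apply: (ES_border C_ES); rewrite /in_grid; lia.
  by apply/implyP => /(marked_house k k_in); rewrite bit_slice (_ : m.-2 + 1 = m.-1) //; lia.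
have := scan_sound S_cert n_gt2 (size_slice C m.-2 3) W.
by rewrite /= pair_ok_rows01 // rows_invariant_bottom.
Qed.

Lemma left_marks_houses : C m.-1 2 -> forall k, 0 < k <= n ->
  left_mark (column n (slice C m.-2 3) k.-2) (column n (slice C m.-2 3) k.+2) -> C m.-1 k.
Proof.
move=> C2 k k_in; rewrite /left_mark /column; case: ifP => // k_le _.
have [->|->] : k = 2 \/ k = 1 by lia.
  exact: C2.
by apply: (ES_border C_ES); rewrite /in_grid; lia.
Qed.

Lemma right_marks_houses : C m.-1 n.-1 -> forall k, 0 < k <= n ->
  right_mark (column n (slice C m.-2 3) k.-2) (column n (slice C m.-2 3) k.+2) -> C m.-1 k.
Proof.
move=> Cn k k_in; rewrite /right_mark /column; case: ifP => // k_ge _.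
have [->|->] : k = n.-1 \/ k = n by lia.
  exact: Cn.
by apply: (ES_border C_ES); rewrite /in_grid; lia.
Qed.

End ESRows.

Theorem mainTheorem11 (m n : nat) (C : config) :
  2 < m -> 2 < n -> ES m n C ->
  C (m - 1) 2 = false /\ C (m - 1) (n - 1) = false.
Proof.
move=> m_gt2 n_gt2 C_ES; rewrite !subn1; split; apply/negbTE/negP => house.
  apply: (bottom_marks_impossible m_gt2 n_gt2 C_ES left_certificate).
  exact: left_marks_houses.
apply: (bottom_marks_impossible m_gt2 n_gt2 C_ES right_certificate).
exact: right_marks_houses.
Qed.
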